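(* Let $\Bbbk$ be a field, $S=\Bbbk[x_1,x_2,x_3]$, let $d\geq 5$ with $d\neq 6$, and let $I=(x_1^d,x_2^d,x_3^d,x_1^{\lfloor d/2\rfloor}x_2^{\lceil d/2\rceil})$. Then $$\mathrm{HF}\left(S/I, \left\lfloor\tfrac{3d-3}{2}\right\rfloor -1 \right)>\mathrm{HF}\left(S/I,\left\lfloor\tfrac{3d-3}{2}\right\rfloor \right).$$
   Context: $\mathrm{HF}(A,k)=\dim_\Bbbk A_k$ denotes the Hilbert function of the graded algebra $A$. *)

From mathcomp Require Import all_boot all_algebra.
From mathcomp Require Import mpoly.
Set Implicit Arguments. Unset Strict Implicit. Unset Printing Implicit Defensive.
Import GRing.Theory.
Local Open Scope ring_scope.

(* S = F[x_1,x_2,x_3] is {mpoly F[3]}; variables x_1,x_2,x_3 are 'X_0,'X_1,'X_2. *)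

Definition in_ideal (F : fieldType) (gs : seq {mpoly F[3]}) (p : {mpoly F[3]}) : Prop :=
  exists qs : seq {mpoly F[3]}, size qs = size gs /\
    p = \sum_(i < size gs) qs`_i * gs`_i.

Definition indep_mod (F : fieldType) (gs : seq {mpoly F[3]}) (k : nat)
    (ps : seq {mpoly F[3]}) : Prop :=
  all (fun p => p \is [in F[3], k.-homog]) ps /\
  forall cs : seq F, size cs = size ps ->
    in_ideal gs (\sum_(i < size ps) cs`_i *: ps`_i) ->
    all (fun c => c == 0) cs.

(* HF(S/(gs), k) = n : dim_F of the degree-k component of S/(gs) is n,
   i.e. n is the maximal size of a family in S_k independent modulo the ideal. *)
Definition HF_is (F : fieldType) (gs : seq {mpoly F[3]}) (k n : nat) : Prop :=
  (exists ps, size ps = n /\ indep_mod gs k ps) /\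
  (forall ps, indep_mod gs k ps -> (size ps <= n)%N).

Definition gensI (F : fieldType) (d : nat) : seq {mpoly F[3]} :=
  [:: 'X_0 ^+ d; 'X_1 ^+ d; 'X_2 ^+ d; 'X_0 ^+ d./2 * 'X_1 ^+ uphalf d].

From mathcomp Require Import all_boot all_algebra.
From mathcomp Require Import mpoly.
From mathcomp Require Import zify.
Set Implicit Arguments. Unset Strict Implicit. Unset Printing Implicit Defensive.
Import GRing.Theory.

(* I is a monomial ideal, so the standard monomials of degree t, those divisible by
   no generator, form a basis of (S/I)_t: they are the x^a y^b z^c with a, b, c < d,
   a + b + c = t and not (a >= floor(d/2) and b >= ceil(d/2)).  For
   k = floor((3d-3)/2), lowering the exponent of z by one maps the standard
   monomials of degree k with c > 0 injectively into those of degree k - 1 with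
   c <= d - 2.  The ones with c = 0, two for even d and one for odd d, can instead be
   sent to monomials with c = d - 1 other than x^(k-d) z^(d-1); this needs k - d >= 2
   for even d and k - d >= 1 for odd d, i.e. d >= 5 and d <> 6. *)

Section MpolyCoef.
Variable n : nat.
Local Open Scope ring_scope.

Lemma mcoeffMX_eq0 (R : nzRingType) (p : {mpoly R[n]}) e m :
  ~~ (e <= m)%MM -> (p * 'X_[e])@_m = 0.
Proof.
move=> e_ndiv_m; apply: memN_msupp_eq0; apply: contra e_ndiv_m => m_supp.
have := perm_mem (msuppMX p e) m; rewrite m_supp => /esym/mapP[m' _ ->].
exact: lem_addr.
Qed.

Lemma exists_comb_mcoeff_eq0 (F : fieldType) (ps : seq {mpoly F[n]})
    (S : seq 'X_{1..n}) :
  (size S < size ps)%N ->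
  exists cs : seq F, [/\ size cs = size ps, has (fun c => c != 0) cs &
    forall m, m \in S -> (\sum_(i < size ps) cs`_i *: ps`_i)@_m = 0].
Proof.
move=> lt_S_ps.
pose A : 'M[F]_(size ps, size S) := \matrix_(i, j) (ps`_i)@_(nth 0%MM S j).
have [v v_neq0 vA0] : exists2 v : 'rV_(size ps), v != 0 & v *m A = 0.
  have ker_neq0 : kermx A != 0.
    by rewrite kermx_eq0 /row_free neq_ltn (leq_ltn_trans (rank_leq_col A)).
  have /existsP[i ker_i] : [exists i, row i (kermx A) != 0].
    apply: contraNT ker_neq0 => /existsPn ker_rows0.
    by apply/eqP/row_matrixP => i; rewrite row0; apply/eqP/negPn.
  by exists (row i (kermx A)); rewrite // -row_mul mulmx_ker row0.
pose cs := [seq v 0 i | i <- enum 'I_(size ps)].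
have cs_v (i : 'I_(size ps)) : cs`_i = v 0 i.
  by rewrite (nth_map i) ?size_enum_ord // nth_ord_enum.
exists cs; split.
- by rewrite size_map size_enum_ord.
- apply: contraNT v_neq0 => /hasPn cs0; apply/eqP/rowP => i.
  by rewrite mxE -cs_v; apply/eqP/negPn/cs0/mem_nth; rewrite size_map size_enum_ord.
- move=> m m_S; have m_idx : (index m S < size S)%N by rewrite index_mem.
  have := congr1 (fun w : 'rV_(size S) => w 0 (Ordinal m_idx)) vA0.
  rewrite !mxE raddf_sum /=; apply: etrans; apply: eq_bigr => i _.
  by rewrite mcoeffZ cs_v !mxE nth_index.
Qed.

End MpolyCoef.

Definition in_mideal (n : nat) (E : seq 'X_{1..n}) (m : 'X_{1..n}) : bool :=
  has (fun e => (e <= m)%MM) E.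

Section MonomialIdeal.
Variables (F : fieldType) (E : seq 'X_{1..3}).
Local Notation gens := [seq 'X_[F, e] | e <- E].
Local Open Scope ring_scope.

Lemma in_ideal_mcoeff_eq0 p m : in_ideal gens p -> ~~ in_mideal E m -> p@_m = 0.
Proof.
case=> qs [_ ->] /hasPn m_std; rewrite raddf_sum big1 // => i _.
have i_lt : (i < size E)%N by rewrite -(size_map (fun e => 'X_[F, e])).
by rewrite (nth_map 0%MM) //; apply/mcoeffMX_eq0/m_std/mem_nth.
Qed.

Lemma in_ideal_of_msupp p :
  {in msupp p, forall m, in_mideal E m} -> in_ideal gens p.
Proof.
move=> supp_in.
pose j m := find (fun e => (e <= m)%MM) E.
have j_lt m : m \in msupp p -> (j m < size E)%N by rewrite -has_find; apply: supp_in.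
exists [seq \sum_(m <- msupp p | j m == i) p@_m *: 'X_[m - nth 0%MM E i]
         | i <- iota 0 (size E)].
rewrite !size_map size_iota; split=> //.
rewrite [LHS]mpolyE.
transitivity (\sum_(i < size E) \sum_(m <- msupp p)
   (if j m == i then p@_m *: 'X_[m] else 0)).
  rewrite exchange_big /=; apply: eq_big_seq => m m_supp.
  rewrite (bigD1 (Ordinal (j_lt m m_supp))) //= eqxx big1 ?addr0 // => i.
  by rewrite -val_eqE /= eq_sym => /negbTE ->.
apply: eq_bigr => i _.
rewrite (nth_map 0%MM) ?size_map // (nth_map 0%N) ?size_iota // nth_iota //.
rewrite add0n mulr_suml [RHS]big_mkcond /=.
apply: eq_big_seq => m m_supp; case: eqP => // <-.
by rewrite -scalerAl -mpolyXD submK //; apply: (nth_find 0%MM (supp_in m m_supp)).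
Qed.

Lemma indep_mod_size_le (S : seq 'X_{1..3}) t ps :
  (forall m, mdeg m = t -> ~~ in_mideal E m -> m \in S) ->
  indep_mod gens t ps -> (size ps <= size S)%N.
Proof.
move=> S_std [ps_homog ps_indep]; rewrite leqNgt; apply/negP.
case/exists_comb_mcoeff_eq0 => cs [size_cs /hasP[c c_cs /negP c_neq0] comb_S].
apply: c_neq0; apply: (allP (ps_indep cs size_cs _)) c_cs.
apply: in_ideal_of_msupp => m; rewrite mcoeff_msupp; apply: contraR => m_std.
apply/eqP; have [deg_m | deg_m] := eqVneq (mdeg m) t; first exact/comb_S/S_std.
rewrite raddf_sum big1 // => i _ /=; rewrite mcoeffZ.
by rewrite (dhomog_nemf_coeff (allP ps_homog _ (mem_nth 0 (ltn_ord i)))) ?mulr0.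
Qed.

Lemma indep_mod_mpolyX (S : seq 'X_{1..3}) t :
  uniq S -> {in S, forall m, mdeg m = t /\ ~~ in_mideal E m} ->
  indep_mod gens t [seq 'X_[m] | m <- S].
Proof.
move=> S_uniq S_std; split.
  by apply/allP => _ /mapP[m m_S ->]; rewrite dhomogX; apply/eqP; case: (S_std m m_S).
move=> cs size_cs comb_in; apply/(all_nthP 0) => j; rewrite size_cs size_map => j_lt.
have [_ /(in_ideal_mcoeff_eq0 comb_in)] := S_std _ (mem_nth 0%MM j_lt).
set Xs := [seq 'X_[m] | m <- S]; have size_Xs : size Xs = size S by rewrite size_map.
have j_lt' : (j < size Xs)%N by rewrite size_Xs.
rewrite raddf_sum (bigD1 (Ordinal j_lt')) //= big1 ?addr0.
  by rewrite mcoeffZ (nth_map 0%MM) // mcoeffX eqxx mulr1 => ->.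
move=> i; rewrite -val_eqE => /negbTE i_neq_j.
have i_lt : (i < size S)%N by rewrite -size_Xs.
by rewrite mcoeffZ (nth_map 0%MM) // mcoeffX nth_uniq // i_neq_j mulr0.
Qed.

Lemma HF_is_standard (S : seq 'X_{1..3}) t : uniq S ->
  (forall m, (m \in S) = (mdeg m == t) && ~~ in_mideal E m) ->
  HF_is gens t (size S).
Proof.
move=> S_uniq S_std; split.
  exists [seq 'X_[m] | m <- S]; rewrite size_map; split=> //.
  by apply: indep_mod_mpolyX => // m; rewrite S_std => /andP[/eqP].
by move=> ps; apply: indep_mod_size_le => m deg_m m_std; rewrite S_std deg_m eqxx.
Qed.

End MonomialIdeal.

Local Notation i0 := (0%R : 'I_3).
Local Notation i1 := (1%R : 'I_3).
Local Notation i2 := (2%R : 'I_3).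

Definition mnm3 (a b c : nat) : 'X_{1..3} := [multinom nth 0%N [:: a; b; c] i | i < 3].

Lemma ord3P (P : 'I_3 -> Prop) : P i0 -> P i1 -> P i2 -> forall i, P i.
Proof.
move=> P0 P1 P2 [[|[|[|i]]] i_lt] //; [move: P0 | move: P1 | move: P2].
all: by congr P; apply: val_inj.
Qed.

Lemma mnm3_coords (m : 'X_{1..3}) : mnm3 (m i0) (m i1) (m i2) = m.
Proof. by apply/mnmP; apply: ord3P; rewrite mnmE. Qed.

Lemma mnm3_inj a b c a' b' c' :
  mnm3 a b c = mnm3 a' b' c' -> [/\ a = a', b = b' & c = c'].
Proof.
move=> /mnmP eq_m; move: (eq_m i0) (eq_m i1) (eq_m i2).
by rewrite !mnmE /= => -> -> ->.
Qed.

Lemma mdeg_mnm3 a b c : mdeg (mnm3 a b c) = (a + b + c)%N.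
Proof. by rewrite mdegE !big_ord_recr big_ord0 /= !mnmE. Qed.

Lemma lem_mnm3 a b c (m : 'X_{1..3}) :
  (mnm3 a b c <= m)%MM = [&& (a <= m i0)%N, (b <= m i1)%N & (c <= m i2)%N].
Proof.
apply/mnm_lepP/and3P => [le_m | [? ? ?]]; last by apply: ord3P; rewrite mnmE.
by move: (le_m i0) (le_m i1) (le_m i2); rewrite !mnmE.
Qed.

Definition gensI_exps (d : nat) : seq 'X_{1..3} :=
  [:: mnm3 d 0 0; mnm3 0 d 0; mnm3 0 0 d; mnm3 d./2 (uphalf d) 0].

Lemma gensI_mpolyX (F : fieldType) d : gensI F d = [seq 'X_[F, e] | e <- gensI_exps d].
Proof.
rewrite /gensI /= !mpolyXn -mpolyXD.
by congr [:: 'X_[_]; 'X_[_]; 'X_[_]; 'X_[_]]; apply/mnmP; apply: ord3P;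
  rewrite ?mnmDE !mulmnE !mnm1E mnmE /= ?mul1n ?mul0n ?addn0.
Qed.

(* The pair (a, b) stands for x^a y^b z^(t - a - b). *)
Definition standard_pair (d t : nat) (ab : nat * nat) : bool :=
  [&& ab.1 < d, ab.2 < d, ab.1 + ab.2 <= t, t < d + (ab.1 + ab.2)
    & ~~ ((d./2 <= ab.1) && (uphalf d <= ab.2))].

Definition standard_pairs (d t : nat) : seq (nat * nat) :=
  [seq ab <- [seq (a, b) | a <- iota 0 d, b <- iota 0 d] | standard_pair d t ab].

Lemma mem_standard_pairs d t ab : (ab \in standard_pairs d t) = standard_pair d t ab.
Proof.
rewrite mem_filter andb_idr // => /and3P[a_lt b_lt _].
by apply/allpairsP; exists ab; rewrite !mem_iota; case: ab a_lt b_lt.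
Qed.

Lemma uniq_standard_pairs d t : uniq (standard_pairs d t).
Proof. by rewrite filter_uniq // allpairs_uniq ?iota_uniq // => -[? ?] [? ?]. Qed.

Lemma HF_gensI (F : fieldType) d t : HF_is (gensI F d) t (size (standard_pairs d t)).
Proof.
rewrite gensI_mpolyX -(size_map (fun ab => mnm3 ab.1 ab.2 (t - ab.1 - ab.2))).
apply: HF_is_standard => [|m].
  rewrite map_inj_in_uniq ?uniq_standard_pairs // => -[a b] [a' b'] _ _.
  by case/mnm3_inj => /= -> ->.
rewrite -(mnm3_coords m); move: (m i0) (m i1) (m i2) => a b c.
rewrite mdeg_mnm3 /in_mideal /= !lem_mnm3 !mnmE /=.
apply/mapP/idP => [[[a' b']] | std].
  by rewrite mem_standard_pairs /standard_pair /= => std /mnm3_inj [-> -> ->]; lia.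
exists (a, b); rewrite ?mem_standard_pairs /standard_pair /=; first lia.
by congr mnm3; lia.
Qed.

Section DegreeDrop.
Variable d : nat.
Hypotheses (d_ge5 : 5 <= d) (d_neq6 : d != 6).
Local Notation k := (3 * d - 3)./2.

(* The standard pairs of degree k with a + b = k are (d/2 - 1, d - 1) and
   (d - 1, d/2 - 1) for even d, and (d - 1, (d - 1)/2) for odd d. *)
Definition lower_pair (ab : nat * nat) : nat * nat :=
  if ab.1 + ab.2 < k then ab
  else if ab.1 < d./2 then (1, k - d - 1) else (0, k - d).

Lemma standard_lower_pair ab :
  standard_pair d k ab -> standard_pair d k.-1 (lower_pair ab).
Proof.
case: ab => a b; rewrite /lower_pair /standard_pair /=.
by case: (ltnP (a + b) k) => ?; case: (ltnP a d./2) => ? /=; lia.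
Qed.

Lemma lower_pair_inj : {in standard_pairs d k &, injective lower_pair}.
Proof.
move=> [a b] [a' b']; rewrite !mem_standard_pairs /standard_pair /lower_pair /=.
move=> std std'; apply: contra_eq; rewrite !xpair_eqE => neq.
by case: (ltnP (a + b) k) => ?; case: (ltnP a d./2) => ?;
  case: (ltnP (a' + b') k) => ?; case: (ltnP a' d./2) => ? /=; rewrite ?xpair_eqE; lia.
Qed.

Lemma standard_missed_pair : standard_pair d k.-1 (k - d, 0).
Proof. rewrite /standard_pair /=; lia. Qed.

Lemma lower_pair_neq_missed ab : standard_pair d k ab -> lower_pair ab != (k - d, 0).
Proof.
case: ab => a b; rewrite /lower_pair /standard_pair /=.
by case: (ltnP (a + b) k) => ?; case: (ltnP a d./2) => ? /=; rewrite ?xpair_eqE; lia.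
Qed.

Lemma size_standard_pairs_drop :
  size (standard_pairs d k) < size (standard_pairs d k.-1).
Proof.
have uniq_image : uniq ((k - d, 0) :: map lower_pair (standard_pairs d k)).
  rewrite /= (map_inj_in_uniq lower_pair_inj) uniq_standard_pairs andbT.
  apply/mapP => -[ab]; rewrite mem_standard_pairs => /lower_pair_neq_missed.
  by move=> /eqP neq eq; apply: neq.
have := uniq_leq_size uniq_image; rewrite /= size_map; apply => ab.
rewrite inE mem_standard_pairs => /predU1P[-> | /mapP[ab' + ->]].
  exact: standard_missed_pair.
by rewrite mem_standard_pairs; apply: standard_lower_pair.
Qed.

End DegreeDrop.

Theorem lemma5p7 (F : fieldType) (d : nat) :
  (5 <= d)%N -> d <> 6%N ->
  exists a b : nat,
    HF_is (gensI F d) ((3 * d - 3)./2).-1 a /\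
    HF_is (gensI F d) ((3 * d - 3)./2) b /\
    (b < a)%N.
Proof.
move=> d_ge5 /eqP d_neq6.
exists (size (standard_pairs d ((3 * d - 3)./2).-1)).
exists (size (standard_pairs d ((3 * d - 3)./2))).
split; first exact: HF_gensI.
split; first exact: HF_gensI.
exact: size_standard_pairs_drop.
Qed.
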